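(* Let $Y$ be an infinite-dimensional real Banach space. Then $\mathrm{A}(X,Y)\subsetneq\mathrm{Lip}_0(X,Y)$ for every nontrivial real Banach space $X$.
   Context: $\widetilde X=\{(x,y)\in X^2:x\neq y\}$. $\mathrm{Lip}_0(X,Y)$ is the Banach space of Lipschitz $f\colon X\to Y$ with $f(0)=0$ and norm $\|f\|=\sup_{(x,y)\in\widetilde X}\|f(x)-f(y)\|/\|x-y\|$. $\mathrm{A}(X,Y)$ is the set of $f\in\mathrm{Lip}_0(X,Y)$ for which there are $z\in Y$ with $\|z\|=\|f\|$ and $(x_n,y_n)\in\widetilde X$ with $\frac{f(x_n)-f(y_n)}{\|x_n-y_n\|}\to z$. *)

From HB Require Import structures.
From mathcomp Require Import all_boot all_order all_algebra.
From mathcomp Require Import all_classical all_reals all_analysis.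
Unset Printing Implicit Defensive.
Import Order.TTheory GRing.Theory Num.Theory.
Import numFieldNormedType.Exports.
Local Open Scope classical_set_scope.
Local Open Scope ring_scope.

Definition finite_dim (R : realType) (Y : normedModType R) : Prop :=
  exists (n : nat) (e : 'I_n -> Y),
    forall y : Y, exists c : 'I_n -> R, y = \sum_(i < n) c i *: e i.

Definition infinite_dim (R : realType) (Y : normedModType R) : Prop :=
  ~ @finite_dim R Y.

Definition Lip0 (R : realType) (X Y : normedModType R) : set (X -> Y) :=
  [set f | f 0 = 0 /\
     exists L : R, forall x y : X, `|f x - f y| <= L * `|x - y| ].

Definition lipnorm (R : realType) (X Y : normedModType R) (f : X -> Y) : R :=
  sup [set r | exists x y : X, x != y /\ r = `|f x - f y| / `|x - y| ].

Definition Aset (R : realType) (X Y : normedModType R) : set (X -> Y) :=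
  [set f | @Lip0 R X Y f /\
     exists z : Y, `|z| = @lipnorm R X Y f /\
       exists (x y : nat -> X), (forall n, x n != y n) /\
         (fun n => `|x n - y n|^-1 *: (f (x n) - f (y n))) @ \oo --> z ].

(* By Riesz's lemma (which needs finite-dimensional subspaces to be closed,
   proved by induction on a spanning list) an infinite-dimensional Y contains
   unit vectors w_0, w_1, ... each at distance at least 1/2 from the span of
   the previous ones.  Let f x = g |x|, where g puts on [k, k + 1/2] a tent of
   slope c_k = 1 - 1/(k+1) in the direction w_k.  A difference quotient of f
   has norm at most 1/2 when the two points lie in different tents, and is
   b w_k with |b| <= c_k < 1 when they lie in the same one; since every c_k is
   attained, the Lipschitz norm of f is sup c_k = 1.  Quotients converging to
   a unit vector would eventually be of the second kind, by the separation
   their direction w_k would eventually be constant, and then their norms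
   would stay below c_k < 1. *)

From HB Require Import structures.
From mathcomp Require Import all_boot all_order all_algebra.
From mathcomp Require Import all_classical all_reals all_analysis.
From mathcomp Require Import lra.
Import Order.TTheory GRing.Theory Num.Theory.
Import numFieldNormedType.Exports.
Local Open Scope classical_set_scope.
Local Open Scope ring_scope.

Lemma cauchy_limit {R : realType} (a : R -> R) :
  (forall e d, 0 < e -> 0 < d -> `|a e - a d| <= e + d) ->
  exists l, forall e, 0 < e -> `|a e - l| <= e.
Proof.
move=> aC; pose S := [set a e - e | e in [set e | 0 < e]].
have S_ub : ubound S (a 1 + 1).
  move=> _ [e /= e0 <-]; have := aC e 1 e0 ltr01; rewrite ler_norml; lra.
have S_sup : has_sup S by split; [exists (a 1 - 1), 1 => //=; exact: ltr01 | exists (a 1 + 1)].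
exists (sup S) => e e0; rewrite ler_norml; apply/andP; split.
- suff : sup S <= a e + e by lra.
  apply: ge_sup; first by case: S_sup.
  move=> _ [d /= d0 <-]; have := aC d e d0 e0; rewrite ler_norml; lra.
- suff : a e - e <= sup S by lra.
  by apply: sup_upper_bound => //; exists e.
Qed.

Definition adherent {R : realType} {Y : normedModType R} (A : set Y) (y : Y) :=
  forall e, 0 < e -> exists2 u, A u & `|y - u| < e.

Lemma nonadherent_dist_gt0 {R : realType} {Y : normedModType R} {A : set Y} {y : Y} :
  ~ adherent A y -> exists2 d, 0 < d & forall u, A u -> d <= `|y - u|.
Proof.
move=> nA; apply: contrapT => nd; apply: nA => e e0.
apply: contrapT => ne; apply: nd; exists e => // u Au.
by rewrite leNgt; apply/negP => yu; apply: ne; exists u.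
Qed.

Section Span.
Context {R : realType} {Y : normedModType R}.
Implicit Types (s : seq Y) (x y u : Y).

Definition span s : set Y :=
  [set y | exists c : nat -> R, y = \sum_(i < size s) c i *: s`_i].

Lemma span0 s : span s 0.
Proof. by exists (fun=> 0); rewrite big1 // => i _; rewrite scale0r. Qed.

Lemma span_nil y : span [::] y -> y = 0.
Proof. by move=> [c ->]; rewrite big_ord0. Qed.

Lemma spanDZ {s y z} r : span s y -> span s z -> span s (y + r *: z).
Proof.
move=> [c ->] [d ->]; exists (fun i => c i + r * d i).
rewrite scaler_sumr -big_split /=; apply: eq_bigr => i _.
by rewrite scalerDl scalerA.
Qed.

Lemma span_cons x s y : span (x :: s) y <-> exists a, span s (y - a *: x).
Proof.
split=> [[c ->]|[a [c yE]]].
  exists (c 0%N), (fun i => c i.+1).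
  by rewrite big_ord_recl addrAC subrr add0r.
exists (fun i => if i is i'.+1 then c i' else a).
by rewrite big_ord_recl /= -yE addrC subrK.
Qed.

Lemma span_finite_dim s : span s = setT -> @finite_dim R Y.
Proof.
move=> sT; exists (size s), (fun i => s`_i) => y.
have [c ->] : span s y by rewrite sT.
by exists (fun i => c i).
Qed.

Lemma span_cons_closed x s : ~ span s x ->
  (forall z, adherent (span s) z -> span s z) ->
  forall y, adherent (span (x :: s)) y -> span (x :: s) y.
Proof.
move=> xNs sC y yA; have [dx dx0 dxP] := nonadherent_dist_gt0 (fun xA => xNs (sC x xA)).
(* Separation of [x] from [span s] makes the coefficient of [x] Lipschitz in the approximant. *)
have coef_bound a u : span s u -> `|a| * dx <= `|u + a *: x|.
  move=> su; have [->|a0] := eqVneq a 0; first by rewrite normr0 mul0r.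
  have -> : u + a *: x = a *: (x - (- a^-1) *: u).
    by rewrite scalerDr scalerN scalerA mulrN mulfV // scaleN1r opprK addrC.
  rewrite normrZ; apply: ler_wpM2l => //; apply: dxP.
  by rewrite -[_ *: u]add0r; apply: spanDZ (span0 s) su.
have /choice[p pP] : forall e, exists p : R * Y,
    0 < e -> span s p.2 /\ `|y - (p.2 + p.1 *: x)| < e * dx.
  move=> e; have [e0|_] := ltP 0 e; last by exists (0, 0).
  have [u /span_cons[a ua] yu] := yA _ (mulr_gt0 e0 dx0).
  by exists (a, u - a *: x) => _; rewrite subrK.
have [l lP] : exists l, forall e, 0 < e -> `|(p e).1 - l| <= e.
  apply: cauchy_limit => e d e0 d0.
  have [sue ye] := pP e e0; have [sud yd] := pP d d0.
  have sub : span s ((p e).2 - (p d).2) by rewrite -scaleN1r; exact: spanDZ.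
  rewrite -(ler_pM2r dx0) mulrDl; apply: le_trans (coef_bound _ _ sub) _.
  rewrite scalerBl addrACA -opprD (le_trans (ler_distD y _ _)) //.
  by rewrite distrC ltW // ltrD.
apply/span_cons; exists l; apply: sC => e e0.
pose k := e / (dx + `|x|).
have dxx0 : 0 < dx + `|x| by rewrite ltr_pwDl.
have k0 : 0 < k by rewrite divr_gt0.
have [suk yk] := pP k k0; exists (p k).2 => //.
have -> : y - l *: x - (p k).2 = (y - ((p k).2 + (p k).1 *: x)) + ((p k).1 - l) *: x.
  by rewrite scalerBl opprD !addrA subrK addrAC.
apply: (le_lt_trans (ler_normD _ _)); rewrite normrZ.
have ek : e = k * dx + k * `|x| by rewrite -mulrDr divfK ?gt_eqF.
rewrite ek; apply: ltr_leD => //; apply: ler_wpM2r => //; exact: lP.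
Qed.

Lemma span_closed s y : adherent (span s) y -> span s y.
Proof.
elim: s y => [|x s IH] y yA.
  suff -> : y = 0 by exact: span0.
  apply/eqP; apply: contraT; rewrite -normr_gt0 => y0.
  by have [u /span_nil ->] := yA _ y0; rewrite subr0 ltxx.
have [xs|xNs] := pselect (span s x); last exact: span_cons_closed.
apply/span_cons; exists 0; rewrite scale0r subr0; apply: IH => e e0.
have [u /span_cons[a ua] yu] := yA e e0.
by exists (u - a *: x + a *: x) => //; [exact: spanDZ | rewrite subrK].
Qed.

Definition riesz_vec s v := `|v| = 1 /\ forall u, span s u -> 2^-1 <= `|v - u|.

Lemma riesz_lemma s : ~ @finite_dim R Y -> exists v, riesz_vec s v.
Proof.
move=> Yinf; have [y ys] : exists y, ~ span s y.
  apply: contrapT => sT; apply: Yinf; apply: (@span_finite_dim s).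
  apply/seteqP; split => // z _; apply: contrapT => zs; apply: sT; by exists z.
set E := [set `|y - u| | u in span s].
have E0 : E !=set0 by exists `|y - 0|, 0 => //; exact: span0.
have Elb : has_lbound E by exists 0 => _ [u _ <-].
have DP u : span s u -> inf E <= `|y - u| by move=> su; apply: ge_inf => //; exists u.
have D0 : 0 < inf E.
  have [d d0 dP] := nonadherent_dist_gt0 (fun yA => ys (span_closed s y yA)).
  by apply: lt_le_trans d0 _; apply: lb_le_inf => // _ [u su <-]; exact: dP.
have [_ [v sv <-] yv] : exists2 r, E r & r < 2 * inf E.
  by apply: inf_lt => //; lra.
have Dyv := DP v sv; set r := `|y - v| in yv Dyv.
have r0 : 0 < r by lra.
exists (r^-1 *: (y - v)); split; first by rewrite normrZ normfV normr_id mulVf ?gt_eqF.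
move=> u su; have -> : r^-1 *: (y - v) - u = r^-1 *: (y - (v + r *: u)).
  by rewrite opprD addrA [RHS]scalerBr scalerA mulVf ?gt_eqF // scale1r.
rewrite normrZ normfV gtr0_norm // mulrC ler_pdivlMr //.
have := DP _ (spanDZ r sv su); lra.
Qed.

Definition riesz_next s := xget 0 (riesz_vec s).

Fixpoint riesz_prefix n :=
  if n is m.+1 then riesz_next (riesz_prefix m) :: riesz_prefix m else [::].

Definition riesz_seq k := riesz_next (riesz_prefix k).

Lemma span_riesz_prefix j k : (j < k)%N -> span (riesz_prefix k) (riesz_seq j).
Proof.
elim: k => // k IH; rewrite ltnS leq_eqVlt => /predU1P[->|/IH jk]; apply/span_cons.
  by exists 1; rewrite scale1r subrr; exact: span0.
by exists 0; rewrite scale0r subr0.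
Qed.

Section RieszSequence.
Hypothesis Yinf : ~ @finite_dim R Y.

Lemma riesz_seqP k : riesz_vec (riesz_prefix k) (riesz_seq k).
Proof. by apply: xgetPex; apply: riesz_lemma. Qed.

Lemma riesz_seq_sep j k a b : (j < k)%N ->
  `|a| / 2 <= `|a *: riesz_seq k - b *: riesz_seq j|.
Proof.
move=> jk; have [->|a0] := eqVneq a 0; first by rewrite normr0 mul0r.
have -> : a *: riesz_seq k - b *: riesz_seq j
    = a *: (riesz_seq k - (a^-1 * b) *: riesz_seq j).
  by rewrite scalerBr scalerA mulrA mulfV // mul1r.
rewrite normrZ; apply: ler_wpM2l => //; apply: (riesz_seqP k).2.
by rewrite -[_ *: _]add0r; apply: spanDZ (span0 _) (span_riesz_prefix _ _ jk).
Qed.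

End RieszSequence.
End Span.

Section Tent.
Context {R : realType}.
Implicit Types r : R.

Definition tent r : R :=
  if r <= 0 then 0 else if r <= 4^-1 then r else if r <= 2^-1 then 2^-1 - r else 0.

Lemma tentP r : [\/ r <= 0 /\ tent r = 0, 0 <= r <= 4^-1 /\ tent r = r,
  4^-1 <= r <= 2^-1 /\ tent r = 2^-1 - r | 2^-1 <= r /\ tent r = 0].
Proof.
rewrite /tent; case: (lerP r 0) => r0; first by apply: Or41.
case: (lerP r 4^-1) => r4; first by apply: Or42; split => //; apply/andP; split; lra.
case: (lerP r 2^-1) => r2; first by apply: Or43; split => //; apply/andP; split; lra.
by apply: Or44; split => //; lra.
Qed.

Ltac tent_cases r := case: (tentP r) => [[+ ->]|[/andP[+ +] ->]|[/andP[+ +] ->]|[+ ->]].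

Lemma tent_ge0 r : 0 <= tent r.
Proof. by tent_cases r; lra. Qed.

Lemma tent_le_quarter r : tent r <= 4^-1.
Proof. by tent_cases r; lra. Qed.

Lemma tent_le r : 0 <= r -> tent r <= r.
Proof. by tent_cases r; lra. Qed.

Lemma tent_le_half r : r <= 2^-1 -> tent r <= 2^-1 - r.
Proof. by tent_cases r; lra. Qed.

Lemma tent_eq0 r : 2^-1 <= r -> tent r = 0.
Proof. by tent_cases r => // *; lra. Qed.

Lemma tent_lip r r' : `|tent r - tent r'| <= `|r - r'|.
Proof.
have := ler_norm (r - r'); have := ler_norm (r' - r); rewrite (distrC r') ler_norml.
by move=> *; apply/andP; split; tent_cases r; tent_cases r'; lra.
Qed.

Lemma tent0 : tent 0 = 0.
Proof. by rewrite /tent lexx. Qed.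

Lemma tent_quarter : tent 4^-1 = 4^-1.
Proof. by tent_cases (4^-1 : R) => // *; lra. Qed.

End Tent.

Section Bumps.
Context {R : realType} {Y : normedModType R} (w : nat -> Y).
Hypothesis w_unit : forall k, `|w k| = 1.

Definition peak (k : nat) : R := 1 - k.+1%:R^-1.

Lemma peak_ge0 k : 0 <= peak k.
Proof. by rewrite subr_ge0 invf_le1 ?ler1n ?ltr0n. Qed.

Lemma peak_lt1 k : peak k < 1.
Proof. by rewrite ltrBlDr ltrDl invr_gt0 ltr0n. Qed.

Definition bumps (t : R) : Y :=
  let k := Num.truncn t in (peak k * tent (t - k%:R)) *: w k.

Lemma normZ_w c k : `|c *: w k| = `|c|.
Proof. by rewrite normrZ w_unit mulr1. Qed.

Lemma bumps_nat k : bumps k%:R = 0.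
Proof. by rewrite /bumps natrK subrr tent0 mulr0 scale0r. Qed.

Lemma bumps_peak k : bumps (k%:R + 4^-1) = (peak k / 4) *: w k.
Proof.
rewrite /bumps; have -> : Num.truncn (k%:R + 4^-1 : R) = k.
  by apply: truncn_def; rewrite -[k.+1%:R]natr1; apply/andP; split; lra.
by rewrite addrC addKr tent_quarter.
Qed.

Lemma bumps_dichotomy_le s t : 0 <= s -> s <= t ->
  `|bumps s - bumps t| <= (t - s) / 2 \/
  exists k b, `|b| <= peak k * (t - s) /\ bumps s - bumps t = b *: w k.
Proof.
move=> s0 st; have t0 : 0 <= t by lra.
rewrite /bumps; set a := Num.truncn s; set b := Num.truncn t.
have /andP[sa1 sa2] := truncn_itv s0; have /andP[tb1 tb2] := truncn_itv t0.
rewrite -/a -/b -[a.+1%:R]natr1 -[b.+1%:R]natr1 in sa1 sa2 tb1 tb2 *.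
have ab : (a <= b)%N by rewrite truncn_ge_nat //; lra.
have pa := peak_ge0 a; have pb := peak_ge0 b; have pa1 := peak_lt1 a; have pb1 := peak_lt1 b.
have ta := tent_ge0 (s - a%:R); have tb := tent_ge0 (t - b%:R).
have tbt : tent (t - b%:R) <= t - b%:R by apply: tent_le; lra.
case: (ltngtP a b) => [ltab|/=|<-]; last first.
- right; exists a, (peak a * (tent (s - a%:R) - tent (t - a%:R))).
  split; last by rewrite mulrBr scalerBl.
  rewrite normrM (ger0_norm pa) ler_wpM2l //.
  apply: le_trans (tent_lip (s - a%:R) (t - a%:R)) _.
  by rewrite opprB addrA subrK distrC ger0_norm ?subr_ge0.
- by rewrite ltnNge ab.
have ab1 : a%:R + 1 <= b%:R :> R by rewrite natr1 ler_nat.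
have [sa|sa] := lerP 2^-1 (s - a%:R).
  right; exists b, (- (peak b * tent (t - b%:R))).
  split; last by rewrite (tent_eq0 _ sa) mulr0 scale0r add0r scaleNr.
  rewrite normrN normrM (ger0_norm pb) (ger0_norm tb) ler_wpM2l //.
  lra.
left; apply: le_trans (ler_normB _ _) _; rewrite !normZ_w.
rewrite !ger0_norm ?mulr_ge0 //.
have := tent_le_half _ (ltW sa).
have := tent_le_quarter (s - a%:R); have := tent_le_quarter (t - b%:R).
have := ler_piMl ta (ltW pa1); have := ler_piMl tb (ltW pb1).
lra.
Qed.

Lemma bumps_dichotomy s t : 0 <= s -> 0 <= t ->
  `|bumps s - bumps t| <= `|s - t| / 2 \/
  exists k b, `|b| <= peak k * `|s - t| /\ bumps s - bumps t = b *: w k.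
Proof.
wlog st : s t / s <= t => [hwlog s0 t0|s0 _].
  have [st|ts] := leP s t; first exact: hwlog.
  case: (hwlog t s (ltW ts) t0 s0) => [h|[k [b [bk e]]]].
    by left; rewrite distrC (distrC s).
  right; exists k, (- b); split; first by rewrite normrN distrC.
  by rewrite scaleNr -e opprB.
by rewrite (distrC s) ger0_norm ?subr_ge0 //; apply: bumps_dichotomy_le.
Qed.

End Bumps.

Definition diff_quot {R : realType} {X Y : normedModType R} (f : X -> Y) (x y : X) : Y :=
  `|x - y|^-1 *: (f x - f y).

Section BumpMap.
Context {R : realType} {X Y : normedModType R} (w : nat -> Y).
Hypothesis w_unit : forall k, `|w k| = 1.

Definition bump_map (x : X) : Y := bumps w `|x|.

Lemma bump_map0 : bump_map 0 = 0.
Proof. by rewrite /bump_map normr0; exact: (bumps_nat w 0). Qed.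

Lemma bump_map_lip x y : `|bump_map x - bump_map y| <= `|x - y|.
Proof.
have xy := ler_dist_dist x y.
case: (bumps_dichotomy _ w_unit _ _ (normr_ge0 x) (normr_ge0 y)) => [|[k [b [bk ->]]]].
  by move=> fxy; apply: le_trans fxy _; have := normr_ge0 (`|x| - `|y|); lra.
rewrite normZ_w //; apply: (le_trans bk).
have := normr_ge0 (`|x| - `|y|); have := @peak_ge0 R k; have := @peak_lt1 R k; nra.
Qed.

Lemma diff_quot_bump_map x y : x != y ->
  `|diff_quot bump_map x y| <= 2^-1 \/
  exists k b, `|b| <= peak k /\ diff_quot bump_map x y = b *: w k.
Proof.
rewrite -subr_eq0 -normr_gt0 => xy0; have xy := ler_dist_dist x y.
have qE (v : Y) : `| `|x - y|^-1 *: v| = `|v| / `|x - y|.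
  by rewrite normrZ normfV normr_id mulrC.
rewrite /diff_quot qE ler_pdivrMr //.
case: (bumps_dichotomy _ w_unit _ _ (normr_ge0 x) (normr_ge0 y)) => [fxy|[k [b [bk fxy]]]].
  by left; apply: le_trans fxy _; have := normr_ge0 (`|x| - `|y|); lra.
right; exists k, (`|x - y|^-1 * b); split; last by rewrite /bump_map fxy scalerA.
rewrite normrM normfV normr_id mulrC ler_pdivrMr //.
by apply: le_trans bk _; apply: ler_wpM2l => //; exact: peak_ge0.
Qed.

Lemma lipnorm_bump_map : (exists x : X, x != 0) -> @lipnorm R X Y bump_map = 1.
Proof.
move=> [x0 x00]; rewrite /lipnorm; set S := [set r | _].
have S_ub : ubound S 1.
  move=> _ [x [y [xy ->]]]; rewrite ler_pdivrMr ?normr_gt0 ?subr_eq0 // mul1r.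
  exact: bump_map_lip.
pose u := `|x0|^-1 *: x0; have u1 : `|u| = 1 by rewrite normrZV // unitfE normr_eq0.
have nu (c : R) : 0 <= c -> `|c *: u| = c by move=> c0; rewrite normrZ u1 mulr1 ger0_norm.
have peakS k : S (peak k).
  exists ((k%:R + 4^-1) *: u), (k%:R *: u).
  have dE : (k%:R + 4^-1) *: u - k%:R *: u = 4^-1 *: u by rewrite -scalerBl addrC addKr.
  rewrite dE nu ?invr_ge0 // /bump_map !nu ?addr_ge0 ?invr_ge0 // bumps_nat subr0.
  rewrite bumps_peak normZ_w // ger0_norm ?divr_ge0 ?peak_ge0 // invrK divfK //.
  split => //.
  by rewrite -subr_eq0 dE scaler_eq0 negb_or invr_eq0 pnatr_eq0 -normr_eq0 u1 oner_eq0.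
apply/eqP; rewrite eq_le ge_sup //=; last by exists (peak 0).
rewrite leNgt; apply/negP => /ltr_add_invr[k].
apply/negP; rewrite -leNgt -lerBlDr; apply: sup_upper_bound; last exact: peakS.
by split; [exists (peak 0) | exists 1].
Qed.

Hypothesis w_sep : forall j k (a b : R), (j < k)%N -> `|a| / 2 <= `|a *: w k - b *: w j|.

Lemma w_sep_neq j k (a b c : R) : j != k -> c <= `|a| -> c <= `|b| ->
  c / 2 <= `|a *: w k - b *: w j|.
Proof.
move=> jk ca cb; case: (ltngtP j k) jk => [jk|kj|->] //= _.
  by apply: le_trans (w_sep j k a b jk); lra.
by rewrite distrC; apply: le_trans (w_sep k j b a kj); lra.
Qed.

Lemma bump_map_not_attained (x y : nat -> X) (z : Y) :
  `|z| = 1 -> (forall n, x n != y n) ->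
  ~ (fun n => diff_quot bump_map (x n) (y n)) @ \oo --> z.
Proof.
move=> z1 xy /cvgrPdist_lt; pose Q n := diff_quot bump_map (x n) (y n).
move=> zQ; have {}zQ : forall e, 0 < e -> \forall n \near \oo, `|z - Q n| < e := zQ.
have Q_large n e : `|z - Q n| < e -> 1 - e < `|Q n|.
  by have := ler_normD (z - Q n) (Q n); rewrite subrK z1; lra.
have Q_vec n e : `|z - Q n| < e -> e <= 2^-1 ->
    exists k b, [/\ 1 - e < `|b|, `|b| <= peak k & Q n = b *: w k].
  move=> zQe e2; have := Q_large n e zQe.
  case: (diff_quot_bump_map _ _ (xy n)) => [|[k [b [bk Qb]]]]; first by lra.
  by exists k, b; split => //; rewrite -(normZ_w _ w_unit b k) -Qb.
have [N _ QN] := zQ 8^-1 (ltac:(by rewrite invr_gt0)).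
have e8 : 8^-1 <= 2^-1 :> R by lra.
have [K [a [aK apK QNa]]] := Q_vec N _ (QN N (leqnn N)) e8.
have eK : 0 < (1 - peak K) / 2 :> R by have := @peak_lt1 R K; lra.
have [M _ QM] := zQ _ eK.
set m := maxn N M; have Nm : (N <= m)%N by apply: leq_maxl.
have [j [b [bj bpj Qmb]]] := Q_vec m _ (QN m Nm) e8.
have /Q_large := QM m (leq_maxr N M); rewrite Qmb normZ_w // => bK.
have jK : j != K by apply: contraTneq bpj => ->; rewrite -ltNge; lra.
have := w_sep_neq _ _ a b _ jK (ltW aK) (ltW bj).
have := QN m Nm; have := QN N (leqnn N); have := ler_distD z (Q N) (Q m).
by rewrite [`|Q N - z|]distrC QNa Qmb; lra.
Qed.

End BumpMap.

Theorem proposition2p7 (R : realType) (Y : completeNormedModType R)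
  (hY : @infinite_dim R Y) (X : completeNormedModType R)
  (hX : exists x : X, x != 0) :
  @Aset R X Y `<` @Lip0 R X Y.
Proof.
pose w := @riesz_seq R Y.
have w_unit k : `|w k| = 1 := (riesz_seqP hY k).1.
pose f := @bump_map R X Y w.
have fL : @Lip0 R X Y f.
  split; first exact: bump_map0.
  by exists 1 => x y; rewrite mul1r; exact: bump_map_lip.
split=> [g []//|/(_ f fL)[_ [z [z1 [x [y [xy xy_cvg]]]]]]].
rewrite lipnorm_bump_map // in z1.
exact: bump_map_not_attained w_unit (riesz_seq_sep hY) x y z z1 xy xy_cvg.
Qed.
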